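(* For a $d$-regular simple graph on $n$ vertices quantised with equi-transmitting scattering matrices, for every $f\in G_1$ and every integer $t\ge0$, $$\psi\big(\hat C^t\tilde\varphi(f)\big)=M^tf.$$
   Context: For directed bond $b$, $o(b),t(b)$ are origin and terminus, $\bar b$ its reversal. For equi-transmitting quantisation, $M$ is the $2B\times2B$ matrix with $M_{bc}=\frac1{d-1}$ if $t(b)=o(c)$ and $c\ne\bar b$, and $0$ otherwise. $e_v\in\mathbb{C}^{2B}$ has component $1$ on each directed bond with origin $v$, $0$ elsewhere; $\tilde e_v$ has component $1$ on each directed bond with terminus $v$, $0$ elsewhere. $G_1=\mathrm{span}\{e_1,\dots,e_n\}$. $\tilde\varphi:G_1\to\mathbb{C}^{2n}$ maps $\sum_va_ve_v$ to $(a_1,\dots,a_n,0,\dots,0)^T$. $\psi:\mathbb{C}^{2n}\to\mathbb{C}^{2B}$ is $\psi(\mathbf a,\mathbf b)=\sum_va_ve_v+\sum_vb_v\tilde e_v$. $C$ is the $n\times n$ connectivity (adjacency) matrix and $\hat C=\begin{pmatrix}0&-\frac1{d-1}I_n\\ I_n&\frac1{d-1}C\end{pmatrix}$. *)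

From HB Require Import structures.
From mathcomp Require Import all_boot all_order all_algebra all_field.
Set Implicit Arguments. Unset Strict Implicit. Unset Printing Implicit Defensive.
Import Order.TTheory GRing.Theory Num.Theory.
Local Open Scope ring_scope.

Definition simple_graph (n : nat) (adj : rel 'I_n) : Prop :=
  (forall u v, adj u v = adj v u) /\ (forall v, ~~ adj v v).

Definition regular (n d : nat) (adj : rel 'I_n) : Prop :=
  forall v, #|[set w | adj v w]| = d.

Definition dbond (n : nat) (adj : rel 'I_n) : finType :=
  {p : 'I_n * 'I_n | adj p.1 p.2}.

Section Graph.
Variables (n : nat) (adj : rel 'I_n).
Local Notation B2 := #|dbond adj|.

Definition borig (b : dbond adj) : 'I_n := (val b).1.
Definition bterm (b : dbond adj) : 'I_n := (val b).2.
Definition is_rev (b c : dbond adj) : bool :=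
  (borig c == bterm b) && (bterm c == borig b).

Definition Mmat (d : nat) : 'M[algC]_B2 :=
  \matrix_(i, j)
    (if (bterm (enum_val i) == borig (enum_val j)) && ~~ is_rev (enum_val i) (enum_val j)
     then (d.-1)%:R^-1 else 0).

Definition evec (v : 'I_n) : 'cV[algC]_B2 :=
  \col_i (borig (enum_val i) == v)%:R.
Definition etvec (v : 'I_n) : 'cV[algC]_B2 :=
  \col_i (bterm (enum_val i) == v)%:R.

Definition G1elt (a : 'cV[algC]_n) : 'cV[algC]_B2 := \sum_v a v 0 *: evec v.

Definition tphi (a : 'cV[algC]_n) : 'cV[algC]_(n + n) := col_mx a 0.

Definition psi (x : 'cV[algC]_(n + n)) : 'cV[algC]_B2 :=
  \sum_v (usubmx x) v 0 *: evec v + \sum_v (dsubmx x) v 0 *: etvec v.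

Definition Cmat : 'M[algC]_n := \matrix_(i, j) (adj i j)%:R.

Definition Chat (d : nat) : 'M[algC]_(n + n) :=
  block_mx 0 (- (d.-1)%:R^-1 *: 1%:M) 1%:M ((d.-1)%:R^-1 *: Cmat).
End Graph.

(* Write [k = 1/(d-1)] and [x = (X, Y)], so that [psi x] takes the value
   [X (o b) + Y (t b)] on the bond [b].  The bonds [c] following [b] without
   backtracking are the [d] bonds leaving [t b] except the reversal of [b];
   summing [X (o c) + Y (t c)] over them gives [(d - 1) X (t b) + (C Y) (t b) - Y (o b)].
   Multiplying by [k], this is the value of [psi (Chat x)] on [b], so
   [M (psi x) = psi (Chat x)], and since [psi (tphi a) = G1elt a] the identity
   follows by induction on [t]. *)
From HB Require Import structures.
From mathcomp Require Import all_boot all_order all_algebra all_field.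
From mathcomp Require Import ring.
Import GRing.Theory Num.Theory.
Set Implicit Arguments.
Unset Strict Implicit.

Local Open Scope ring_scope.

Section Bonds.
Variables (n : nat) (adj : rel 'I_n).

Definition follows (b c : dbond adj) : bool :=
  (borig c == bterm b) && ~~ is_rev b c.

Lemma sum_mul_eq_nat (f : 'I_n -> algC) (u : 'I_n) :
  \sum_v f v * (u == v)%:R = f u.
Proof.
rewrite (bigD1 u) //= eqxx mulr1 big1 ?addr0 // => v /negPf.
by rewrite eq_sym => ->; rewrite mulr0.
Qed.

Lemma psi_col (x : 'cV[algC]_(n + n)) :
  psi adj x =
  \col_i (usubmx x (borig (enum_val i)) 0 + dsubmx x (bterm (enum_val i)) 0).
Proof.
apply/matrixP => i j; rewrite (ord1 j) {j} [RHS]mxE.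
rewrite -(sum_mul_eq_nat (usubmx x ^~ 0)) -(sum_mul_eq_nat (dsubmx x ^~ 0)).
rewrite /psi mxE !summxE.
by congr (_ + _); apply: eq_bigr => v _; rewrite !mxE.
Qed.

Lemma psi_tphi (a : 'cV[algC]_n) : psi adj (tphi a) = G1elt adj a.
Proof.
rewrite /psi /tphi /G1elt col_mxKu col_mxKd.
by rewrite [X in _ + X]big1 ?addr0 // => v _; rewrite mxE scale0r.
Qed.

Lemma Mmat_mul_col d (f : dbond adj -> algC) (i : 'I_#|dbond adj|) :
  (Mmat adj d *m \col_j f (enum_val j)) i 0 =
  (d.-1)%:R^-1 * \sum_(c | follows (enum_val i) c) f c.
Proof.
rewrite mxE mulr_sumr [RHS]big_mkcond /= [RHS](big_enum_val (A := predT)) /=.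
apply: eq_bigr => j _; rewrite !mxE eq_sym.
by rewrite /follows; case: ifP; rewrite ?mul0r.
Qed.

Lemma sum_bonds_between (F : 'I_n -> 'I_n -> algC) (u w : 'I_n) :
  \sum_(b : dbond adj | (borig b == u) && (bterm b == w)) F (borig b) (bterm b)
  = (adj u w)%:R * F u w.
Proof.
case Huw: (adj u w).
  by rewrite (big_pred1 (exist _ (u, w) Huw : dbond adj)) ?mul1r.
rewrite big_pred0 ?mul0r // => b; apply/andP => -[/eqP Eu /eqP Ew].
by move: (valP b); rewrite -/(borig b) -/(bterm b) Eu Ew Huw.
Qed.

Lemma sum_bonds_from (F : 'I_n -> 'I_n -> algC) (u : 'I_n) :
  \sum_(b : dbond adj | borig b == u) F (borig b) (bterm b)
  = \sum_w (adj u w)%:R * F u w.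
Proof.
rewrite (partition_big (@bterm n adj) xpredT) //.
by apply: eq_bigr => w _; rewrite sum_bonds_between.
Qed.

Hypothesis adj_sym : forall u v, adj u v = adj v u.

Lemma sum_follows (F : 'I_n -> 'I_n -> algC) (b : dbond adj) :
  \sum_(c | follows b c) F (borig c) (bterm c)
  = \sum_w (adj (bterm b) w)%:R * F (bterm b) w - F (bterm b) (borig b).
Proof.
have rev_bond :
    \sum_(c : dbond adj | (borig c == bterm b) && is_rev b c) F (borig c) (bterm c)
    = F (bterm b) (borig b).
  rewrite (eq_bigl (fun c => (borig c == bterm b) && (bterm c == borig b))).
    by rewrite sum_bonds_between adj_sym (valP b) mul1r.
  by move=> c; rewrite /is_rev andbA andbb.
rewrite -rev_bond -sum_bonds_from [in RHS](bigID (is_rev b)) /=.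
by rewrite addrC addrK.
Qed.

End Bonds.

Lemma sum_adj_regular n d (adj : rel 'I_n) (u : 'I_n) :
  regular d adj -> \sum_w ((adj u w)%:R : algC) = d%:R.
Proof.
move=> reg_adj; rewrite -natr_sum -(reg_adj u) -sum1_card [in RHS]big_mkcond /=.
by congr _%:R; apply: eq_bigr => w _; rewrite inE; case: (adj u w).
Qed.

Lemma Chat_mul n d (adj : rel 'I_n) (x : 'cV[algC]_(n + n)) :
  Chat adj d *m x =
  col_mx (- (d.-1)%:R^-1 *: dsubmx x)
         (usubmx x + (d.-1)%:R^-1 *: (Cmat adj *m dsubmx x)).
Proof.
rewrite -{1}(vsubmxK x) mul_block_col mul0mx add0r mul1mx.
by rewrite scalemx1 mul_scalar_mx -scalemxAl.
Qed.

Lemma Mmat_mul_psi n d (adj : rel 'I_n) (x : 'cV[algC]_(n + n)) :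
  simple_graph adj -> regular d adj -> (2 <= d)%N ->
  Mmat adj d *m psi adj x = psi adj (Chat adj d *m x).
Proof.
move=> [adj_sym _] reg_adj d_ge2.
set X := usubmx x; set Y := dsubmx x.
have dE : (d%:R : algC) = (d.-1)%:R + 1 by rewrite natr1 prednK // ltnW.
have dm1_neq0 : ((d.-1)%:R : algC) != 0.
  by rewrite pnatr_eq0 -lt0n -ltnS prednK // ltnW.
apply/matrixP => i j; rewrite (ord1 j) {j}.
rewrite psi_col Chat_mul psi_col col_mxKu col_mxKd -/X -/Y; clearbody X Y.
rewrite (Mmat_mul_col _ (fun c => X (borig c) 0 + Y (bterm c) 0)).
rewrite (sum_follows adj_sym (fun u w => X u 0 + Y w 0)) !mxE.
set b := enum_val i; set S := \sum_w _.
have S_split : S = d%:R * X (bterm b) 0 + \sum_w Cmat adj (bterm b) w * Y w 0.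
  rewrite -(sum_adj_regular (bterm b) reg_adj) mulr_suml -big_split /=.
  by apply: eq_bigr => w _; rewrite mxE mulrDr.
by rewrite S_split dE; field.
Qed.

Theorem proposition7 (n d : nat) (adj : rel 'I_n)
  (Hsimple : simple_graph adj) (Hreg : regular d adj) (Hd : (2 <= d)%N)
  (a : 'cV[algC]_n) (t : nat) :
  psi adj (Chat adj d ^+ t *m tphi a) = Mmat adj d ^+ t *m G1elt adj a.
Proof.
elim: t => [|t IH]; first by rewrite !expr0 !mul1mx psi_tphi.
by rewrite !exprS -!mulmxE -!mulmxA -IH Mmat_mul_psi.
Qed.
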